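(* Let $G$ be a countably infinite disconnected IH-homogeneous graph. Then there exist $n,m\in\omega+1$ (each either a positive integer or $\omega$) with $\max\{m,n\}=\omega$ such that $G\cong I_n[K_m]$.
   Context: All graphs are undirected and loopless; subgraphs are induced. $G$ is IH-homogeneous if every isomorphism between finite induced subgraphs of $G$ is the restriction of an endomorphism of $G$ (a map $G\to G$ sending adjacent vertices to adjacent vertices). $K_\kappa$ is the complete graph and $I_\kappa$ the edgeless graph on $\kappa$ vertices; the lexicographic product $G[H]$ has vertex set $G\times H$ with $(g,h)\sim(g',h')$ iff $g\sim g'$, or $g=g'$ and $h\sim h'$; so $I_n[K_m]$ is a disjoint union of $n$ copies of $K_m$. *)

From Stdlib Require Import List Relations.
Import ListNotations.

Definition simple_graph (V : Type) (adj : V -> V -> Prop) : Prop :=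
  (forall x y, adj x y -> adj y x) /\ (forall x, ~ adj x x).

Definition countably_infinite (V : Type) : Prop :=
  exists e : nat -> V, (forall i j, e i = e j -> i = j) /\ (forall v, exists i, e i = v).

Definition disconnected (V : Type) (adj : V -> V -> Prop) : Prop :=
  exists x y : V, ~ clos_refl_trans V adj x y.

Definition endomorphism (V : Type) (adj : V -> V -> Prop) (g : V -> V) : Prop :=
  forall x y, adj x y -> adj (g x) (g y).

(* IH-homogeneous: every isomorphism f between the finite induced subgraphs on
   A and on f(A) (f injective on A, preserving and reflecting adjacency on A)
   is the restriction of an endomorphism of G. *)
Definition IH_homogeneous (V : Type) (adj : V -> V -> Prop) : Prop :=
  forall (A : list V) (f : V -> V),
    (forall x y, In x A -> In y A -> f x = f y -> x = y) ->
    (forall x y, In x A -> In y A -> (adj x y <-> adj (f x) (f y))) ->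
    exists g : V -> V, endomorphism V adj g /\ (forall x, In x A -> g x = f x).

(* Elements of omega+1 minus 0: Some k (k >= 1) is the positive integer k,
   None is omega. [below c i] means i < c, i.e. i ranges over a set of size c. *)
Definition below (c : option nat) (i : nat) : Prop :=
  match c with None => True | Some k => i < k end.

Definition positive_card (c : option nat) : Prop :=
  match c with None => True | Some k => 0 < k end.

(* I_n[K_m]: vertex set {(i,j) | i < n, j < m}, (i,j) ~ (i',j') iff i = i' and j <> j'. *)
Definition IK_vertex (n m : option nat) (p : nat * nat) : Prop :=
  below n (fst p) /\ below m (snd p).

Definition IK_adj (p q : nat * nat) : Prop :=
  fst p = fst q /\ snd p <> snd q.

Definition iso_to_IK (V : Type) (adj : V -> V -> Prop) (n m : option nat) : Prop :=
  exists phi : V -> nat * nat,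
    (forall v, IK_vertex n m (phi v)) /\
    (forall u v, phi u = phi v -> u = v) /\
    (forall p, IK_vertex n m p -> exists v, phi v = p) /\
    (forall u v, adj u v <-> IK_adj (phi u) (phi v)).

(* In an IH-homogeneous graph, a partial map sending two distinct non-adjacent
   vertices a, b to two vertices x, y in different components extends to an
   endomorphism, and endomorphisms preserve connectivity; so if G is
   disconnected, non-adjacent vertices always lie in different components,
   i.e. "equal or adjacent" is an equivalence relation and G is a disjoint
   union of cliques.  Extending a one-point map a |-> b yields an endomorphism
   which is injective on the clique of a and maps it into the clique of b, so
   all cliques have the same size m.  Enumerating the cliques by their least
   vertex and the vertices of each clique in increasing order gives the
   isomorphism with I_n[K_m]; as G is infinite, n or m is omega. *)

From Stdlib Require Import List Relations.
From Stdlib Require Import Classical ClassicalEpsilon ConstructiveEpsilon Lia Arith.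
Import ListNotations.

Definition decide (P : Prop) : bool :=
  if excluded_middle_informative P then true else false.

Lemma decide_true (P : Prop) : decide P = true <-> P.
Proof.
  unfold decide; destruct (excluded_middle_informative P); split; intro H;
    auto; discriminate.
Qed.

Definition count_below (P : nat -> Prop) (N : nat) : nat :=
  length (filter (fun i => decide (P i)) (seq 0 N)).

Definition in_count_range (P : nat -> Prop) (k : nat) : Prop :=
  exists N, k < count_below P N.

Lemma count_below_succ P N :
  count_below P (S N) = count_below P N + (if decide (P N) then 1 else 0).
Proof.
  unfold count_below. rewrite seq_S, filter_app, length_app.
  simpl. destruct (decide (P N)); simpl; lia.
Qed.

Lemma count_below_mono P a b : a <= b -> count_below P a <= count_below P b.
Proof. induction 1; auto. rewrite count_below_succ. lia. Qed.

Lemma count_below_succ_in P a : P a -> count_below P (S a) = S (count_below P a).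
Proof. intro Ha. rewrite count_below_succ. apply decide_true in Ha. rewrite Ha. lia. Qed.

Lemma count_below_lt P a b : P a -> a < b -> count_below P a < count_below P b.
Proof.
  intros Ha Hab. pose proof (count_below_mono P (S a) b Hab) as Hle.
  rewrite count_below_succ_in in Hle by exact Ha. lia.
Qed.

Lemma count_below_inj P a b :
  P a -> P b -> count_below P a = count_below P b -> a = b.
Proof.
  intros Ha Hb Heq. destruct (lt_eq_lt_dec a b) as [[Hlt|Hab]|Hlt]; auto.
  - pose proof (count_below_lt P a b Ha Hlt). lia.
  - pose proof (count_below_lt P b a Hb Hlt). lia.
Qed.

Lemma count_below_ext P Q N : (forall i, P i <-> Q i) -> count_below P N = count_below Q N.
Proof.
  intro HPQ. induction N as [|N IH]; auto.
  rewrite !count_below_succ, IH.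
  replace (decide (Q N)) with (decide (P N)); auto.
  unfold decide.
  destruct (excluded_middle_informative (P N)), (excluded_middle_informative (Q N));
    firstorder.
Qed.

Lemma in_count_range_iff P k : in_count_range P k <-> exists i, P i /\ count_below P i = k.
Proof.
  split.
  - intros [N HN]. induction N as [|N IH]; [cbn in HN; lia|].
    rewrite count_below_succ in HN.
    destruct (le_lt_dec (count_below P N) k) as [Hge|Hlt]; [|exact (IH Hlt)].
    destruct (decide (P N)) eqn:HPN; [|lia].
    exists N. split; [apply decide_true; exact HPN | lia].
  - intros [i [Hi Hk]]. exists (S i). rewrite count_below_succ_in by exact Hi. lia.
Qed.

Lemma in_count_range_below P : exists c, forall k, below c k <-> in_count_range P k.
Proof.
  destruct (classic (forall k, in_count_range P k)) as [Hall|Hnot].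
  - exists None. simpl. firstorder.
  - apply not_all_ex_not in Hnot.
    destruct (epsilon_smallest (fun k => ~ in_count_range P k)
                (fun k => excluded_middle_informative _) Hnot) as [M [HM Hmin]].
    exists (Some M). intro k. simpl. split.
    + intro Hk. apply NNPP. intro Hnk. specialize (Hmin k Hnk). lia.
    + intros [N HN]. destruct (le_lt_dec M k) as [Hle|]; auto.
      exfalso. apply HM. exists N. lia.
Qed.

Lemma list_nat_bounded (l : list nat) : exists B, forall x, In x l -> x < B.
Proof.
  induction l as [|a l [B HB]]; [exists 0; simpl; tauto|].
  exists (S (Nat.max a B)). intros x [<-|Hx]; [lia | specialize (HB x Hx); lia].
Qed.

Lemma in_count_range_inj_map (P Q : nat -> Prop) (f : nat -> nat) k :
  (forall i, P i -> Q (f i)) -> (forall i j, P i -> P j -> f i = f j -> i = j) ->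
  in_count_range P k -> in_count_range Q k.
Proof.
  intros HPQ Hinj [N HN].
  set (l := filter (fun i => decide (P i)) (seq 0 N)).
  destruct (list_nat_bounded (map f l)) as [B HB].
  exists B.
  assert (Hnodup : NoDup (map f l)).
  { apply NoDup_map_NoDup_ForallPairs; [|apply NoDup_filter, seq_NoDup].
    intros x y Hx Hy. apply filter_In in Hx, Hy.
    apply Hinj; apply decide_true; tauto. }
  assert (Hincl : incl (map f l) (filter (fun i => decide (Q i)) (seq 0 B))).
  { intros y Hy. apply filter_In. split.
    - apply in_seq. specialize (HB y Hy). lia.
    - apply in_map_iff in Hy. destruct Hy as [x [<- Hx]]. apply filter_In in Hx.
      apply decide_true, HPQ, decide_true. tauto. }
  pose proof (NoDup_incl_length Hnodup Hincl) as Hlen.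
  rewrite length_map in Hlen. unfold count_below in *. fold l in HN. lia.
Qed.

Lemma finite_grid_no_injection N M (f : nat -> nat * nat) :
  (forall i, IK_vertex (Some N) (Some M) (f i)) -> ~ (forall i j, f i = f j -> i = j).
Proof.
  intros Hf Hinj.
  set (l := map f (seq 0 (S (N * M)))).
  assert (Hnodup : NoDup l).
  { apply NoDup_map_NoDup_ForallPairs; [intros i j _ _; apply Hinj | apply seq_NoDup]. }
  assert (Hincl : incl l (list_prod (seq 0 N) (seq 0 M))).
  { intros p Hp. apply in_map_iff in Hp. destruct Hp as [i [<- _]].
    destruct (Hf i) as [H1 H2]. destruct (f i). apply in_prod_iff.
    split; apply in_seq; simpl in *; lia. }
  pose proof (NoDup_incl_length Hnodup Hincl) as Hlen. unfold l in Hlen.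
  rewrite length_map, length_prod, !length_seq in Hlen. lia.
Qed.

Section ClassGrid.

Variable R : nat -> nat -> Prop.
Hypothesis R_refl : forall i, R i i.
Hypothesis R_sym : forall i j, R i j -> R j i.
Hypothesis R_trans : forall i j k, R i j -> R j k -> R i k.
Hypothesis class_injects : forall a b, exists f : nat -> nat,
  (forall i, R i a -> R (f i) b) /\ (forall i j, R i a -> R j a -> f i = f j -> i = j).

Definition class_of (a : nat) : nat -> Prop := fun j => R j a.

Definition leader (i : nat) : nat :=
  proj1_sig (epsilon_smallest (class_of i) (fun j => excluded_middle_informative _)
               (ex_intro _ i (R_refl i))).

Lemma leader_spec i : R (leader i) i /\ forall j, R j i -> leader i <= j.
Proof. unfold leader. destruct epsilon_smallest as [l Hl]. exact Hl. Qed.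

Lemma leader_eq i j : R i j -> leader i = leader j.
Proof.
  intro Hij. destruct (leader_spec i) as [Hi Hi_min], (leader_spec j) as [Hj Hj_min].
  apply Nat.le_antisymm; [apply Hi_min | apply Hj_min]; eauto.
Qed.

Lemma R_of_leader_eq i j : leader i = leader j -> R i j.
Proof.
  intro Hl. apply R_trans with (leader i); [apply R_sym, leader_spec|].
  rewrite Hl. apply leader_spec.
Qed.

Definition is_leader (i : nat) : Prop := forall j, j < i -> ~ R j i.

Lemma leader_is_leader i : is_leader (leader i).
Proof.
  intros j Hj Hji. destruct (leader_spec i) as [Hl Hmin].
  specialize (Hmin j (R_trans _ _ _ Hji Hl)). lia.
Qed.

Lemma is_leader_leader_id i : is_leader i -> leader i = i.
Proof.
  intro Hi. destruct (leader_spec i) as [Hl Hmin]. specialize (Hmin i (R_refl i)).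
  destruct (Nat.eq_dec (leader i) i) as [|Hne]; auto.
  exfalso. apply (Hi (leader i)); [lia | exact Hl].
Qed.

Definition class_index (i : nat) : nat := count_below is_leader (leader i).

Definition member_index (i : nat) : nat := count_below (class_of i) i.

Lemma class_index_eq i j : class_index i = class_index j <-> R i j.
Proof.
  unfold class_index. split.
  - intro H. apply R_of_leader_eq, (count_below_inj is_leader); auto using leader_is_leader.
  - intro H. rewrite (leader_eq i j H). reflexivity.
Qed.

Lemma class_of_ext i j : R i j -> forall k, class_of i k <-> class_of j k.
Proof. unfold class_of. split; eauto. Qed.

Lemma index_pair_inj i j :
  class_index i = class_index j -> member_index i = member_index j -> i = j.
Proof.
  intros Hc Hm. apply class_index_eq in Hc. unfold member_index in Hm.
  rewrite (count_below_ext (class_of j) (class_of i)) in Hm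
    by (apply class_of_ext; auto).
  apply (count_below_inj (class_of i)); unfold class_of; auto.
Qed.

Lemma class_count_range a b k :
  in_count_range (class_of a) k -> in_count_range (class_of b) k.
Proof.
  destruct (class_injects a b) as [f [Hmaps Hinj]].
  apply in_count_range_inj_map with f; auto.
Qed.

Theorem class_grid : exists (n m : option nat) (phi : nat -> nat * nat),
  positive_card n /\ positive_card m /\
  (forall i, IK_vertex n m (phi i)) /\
  (forall i j, phi i = phi j -> i = j) /\
  (forall p, IK_vertex n m p -> exists i, phi i = p) /\
  (forall i j, R i j /\ i <> j <-> IK_adj (phi i) (phi j)).
Proof.
  destruct (in_count_range_below is_leader) as [n Hn].
  destruct (in_count_range_below (class_of 0)) as [m Hm].
  assert (Hpos : forall c, below c 0 -> positive_card c) by (intros [c|]; simpl; auto).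
  assert (Hinj : forall i j, (class_index i, member_index i) = (class_index j, member_index j) -> i = j).
  { intros i j Hij. injection Hij as Hc Hm'. exact (index_pair_inj i j Hc Hm'). }
  exists n, m, (fun i => (class_index i, member_index i)).
  split; [|split; [|split; [|split; [|split]]]].
  - apply Hpos, Hn, in_count_range_iff. exists 0. split; [intros j Hj; lia | reflexivity].
  - apply Hpos, Hm, in_count_range_iff. exists 0. split; [apply R_refl | reflexivity].
  - intro i. split; simpl.
    + apply Hn, in_count_range_iff. exists (leader i). auto using leader_is_leader.
    + apply Hm, (class_count_range i), in_count_range_iff. exists i. split; auto.
      apply R_refl.
  - exact Hinj.
  - intros [c k] [Hc Hk]. simpl in Hc, Hk.
    apply Hn, in_count_range_iff in Hc. destruct Hc as [l [Hl <-]].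
    apply Hm, (class_count_range 0 l), in_count_range_iff in Hk.
    destruct Hk as [i [Hi <-]].
    exists i. unfold class_index, member_index.
    rewrite (leader_eq i l Hi), is_leader_leader_id, (count_below_ext (class_of i) (class_of l))
      by (auto; apply class_of_ext; auto).
    reflexivity.
  - intros i j. unfold IK_adj. simpl. rewrite <- class_index_eq.
    split; intros [Hc Hne]; split; try exact Hc.
    + intro Hm'. exact (Hne (index_pair_inj i j Hc Hm')).
    + intros <-. exact (Hne eq_refl).
Qed.

End ClassGrid.

Section IHHomogeneousGraph.

Context {V : Type} (adj : V -> V -> Prop).
Hypothesis adj_sym : forall x y, adj x y -> adj y x.
Hypothesis adj_irrefl : forall x, ~ adj x x.

Definition equal_or_adj (x y : V) : Prop := x = y \/ adj x y.

Lemma endomorphism_connect g x y :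
  endomorphism V adj g -> clos_refl_trans V adj x y -> clos_refl_trans V adj (g x) (g y).
Proof.
  intros Hg Hxy. induction Hxy; [apply rt_step; auto | apply rt_refl | eapply rt_trans; eauto].
Qed.

Lemma endomorphism_equal_or_adj g x y :
  endomorphism V adj g -> equal_or_adj x y -> equal_or_adj (g x) (g y).
Proof. intros Hg [<-|Hxy]; [left | right; apply Hg]; auto. Qed.

Lemma endomorphism_inj_equal_or_adj g x y :
  endomorphism V adj g -> equal_or_adj x y -> g x = g y -> x = y.
Proof.
  intros Hg [|Hxy] Hgxy; auto. exfalso. apply Hg in Hxy. rewrite Hgxy in Hxy.
  exact (adj_irrefl _ Hxy).
Qed.

Lemma adj_iff_equal_or_adj x y : adj x y <-> equal_or_adj x y /\ x <> y.
Proof.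
  split; [intro H; split; [right; exact H | intros ->; exact (adj_irrefl _ H)]|].
  intros [[|H] Hne]; tauto.
Qed.

Hypothesis IH : IH_homogeneous V adj.

Lemma IH_vertex_transitive a b : exists g, endomorphism V adj g /\ g a = b.
Proof.
  destruct (IH [a] (fun _ => b)) as [g [Hg Hga]].
  - intros x y [<-|[]] [<-|[]] _. reflexivity.
  - intros x y [<-|[]] [<-|[]]. split; intro H; exfalso; eapply adj_irrefl; eauto.
  - exists g. split; [exact Hg | apply Hga; left; reflexivity].
Qed.

Lemma IH_nonadjacent_disconnected :
  disconnected V adj -> forall a b, a <> b -> ~ adj a b -> ~ clos_refl_trans V adj a b.
Proof.
  intros [x [y Hxy]] a b Hab Hnadj Hconn.
  assert (Hxy_ne : x <> y) by (intros ->; apply Hxy, rt_refl).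
  set (f := fun z => if excluded_middle_informative (z = a) then x else y).
  assert (fa : f a = x) by (unfold f; destruct excluded_middle_informative; congruence).
  assert (fb : f b = y) by (unfold f; destruct excluded_middle_informative; congruence).
  assert (Hx_y : ~ adj x y) by (intro H; apply Hxy, rt_step, H).
  destruct (IH [a; b] f) as [g [Hg Hgf]].
  - intros p q [<-|[<-|[]]] [<-|[<-|[]]]; congruence.
  - intros p q [<-|[<-|[]]] [<-|[<-|[]]]; rewrite ?fa, ?fb;
      split; intro H; exfalso;
      first [ exact (adj_irrefl _ H) | exact (Hnadj H) | exact (Hnadj (adj_sym _ _ H))
            | exact (Hx_y H) | exact (Hx_y (adj_sym _ _ H)) ].
  - apply Hxy. rewrite <- fa, <- fb, <- (Hgf a), <- (Hgf b) by (simpl; auto).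
    exact (endomorphism_connect g a b Hg Hconn).
Qed.

Lemma IH_equal_or_adj_trans :
  disconnected V adj -> forall x y z, equal_or_adj x y -> equal_or_adj y z -> equal_or_adj x z.
Proof.
  intros Hdisc x y z Hxy Hyz.
  destruct (classic (equal_or_adj x z)) as [|Hxz]; auto. exfalso.
  apply (IH_nonadjacent_disconnected Hdisc x z).
  - intros ->. apply Hxz. left. reflexivity.
  - intro H. apply Hxz. right. exact H.
  - apply rt_trans with y;
      [destruct Hxy as [<-|H] | destruct Hyz as [<-|H]]; auto using rt_refl, rt_step.
Qed.

Lemma IH_clique_injects :
  disconnected V adj -> forall a b, exists g : V -> V,
    (forall x, equal_or_adj x a -> equal_or_adj (g x) b) /\
    (forall x y, equal_or_adj x a -> equal_or_adj y a -> g x = g y -> x = y).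
Proof.
  intros Hdisc a b. destruct (IH_vertex_transitive a b) as [g [Hg Hgab]].
  exists g. split.
  - intros x Hx. rewrite <- Hgab. apply endomorphism_equal_or_adj; auto.
  - intros x y Hx Hy. apply endomorphism_inj_equal_or_adj; auto.
    apply IH_equal_or_adj_trans with a; auto.
    destruct Hy as [<-|H]; [left | right]; auto.
Qed.

End IHHomogeneousGraph.

Lemma countably_infinite_inverse (V : Type) : countably_infinite V ->
  exists (e : nat -> V) (idx : V -> nat), (forall i, idx (e i) = i) /\ (forall v, e (idx v) = v).
Proof.
  intros [e [Einj Esurj]].
  destruct (choice (fun v i => e i = v) Esurj) as [idx Hidx].
  exists e, idx. split; auto.
Qed.

Theorem lemma3p1 (V : Type) (adj : V -> V -> Prop)
  (Hg : simple_graph V adj) (Hcount : countably_infinite V)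
  (Hdisc : disconnected V adj) (Hih : IH_homogeneous V adj) :
  exists n m : option nat,
    positive_card n /\ positive_card m /\ (n = None \/ m = None) /\
    iso_to_IK V adj n m.
Proof.
  destruct Hg as [Hsym Hirr].
  destruct (countably_infinite_inverse _ Hcount) as [e [idx [Hidx_e He_idx]]].
  destruct (class_grid (fun i j => equal_or_adj adj (e i) (e j)))
    as (n & m & phi & Hn & Hm & Hvert & Hinj & Hsurj & Hadj).
  - intro i. left. reflexivity.
  - intros i j [H|H]; [left | right]; auto.
  - intros i j k. apply (IH_equal_or_adj_trans adj Hsym Hirr Hih Hdisc).
  - intros a b. destruct (IH_clique_injects adj Hsym Hirr Hih Hdisc (e a) (e b)) as [g [Hmaps Hinj]].
    exists (fun i => idx (g (e i))). split.
    + intros i Hi. rewrite He_idx. auto.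
    + intros i j Hi Hj Hij. rewrite <- (Hidx_e i), <- (Hidx_e j). f_equal.
      apply Hinj; auto. rewrite <- (He_idx (g (e i))), Hij. apply He_idx.
  - exists n, m. split; [exact Hn | split; [exact Hm | split]].
    + destruct n as [N|]; [destruct m as [M|]|]; auto.
      exfalso. exact (finite_grid_no_injection N M phi Hvert Hinj).
    + exists (fun v => phi (idx v)). split; [|split; [|split]]; auto.
      * intros u v Huv. rewrite <- (He_idx u), <- (He_idx v). f_equal. auto.
      * intros p Hp. destruct (Hsurj p Hp) as [i <-]. exists (e i). rewrite Hidx_e. reflexivity.
      * intros u v. rewrite <- Hadj, (adj_iff_equal_or_adj adj Hirr), !He_idx.
        split; intros [H Hne]; split; congruence.
Qed.
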